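(* Let $\mathcal{G}=(G,\Pi,T,s_0)$ be a game and let $t\in\mathbb{Q}\cap[0,1]$ be a threshold. If there is a collective strategy $\bar\sigma_\Pi$ such that for every strategy $\sigma_{\mathsf O}$ of the opponent the set $T$ is reached from $s_0$ with probability strictly greater than $t$, then there is a memoryless collective strategy with the same property.
   Context: A game structure is $G=(\Sigma,S,(A_p)_{p\in\Sigma},(\mathsf{Av}_p)_{p\in\Sigma},\delta)$ with a set $\Sigma$ of players, a finite set $S$ of states, finite action sets $A_p$, nonempty sets $\mathsf{Av}_p(s)\subseteq A_p$ of actions available to $p$ at $s$, and a transition function $\delta$ mapping each state $s$ and each action profile $(a_p)_{p\in\Sigma}$ with $a_p\in\mathsf{Av}_p(s)$ to a probability distribution $\delta(s,(a_p)_p)$ on $S$. A game is $\mathcal G=(G,\Pi,T,s_0)$ with a team $\Pi\subseteq\Sigma$, target set $T\subseteq S$ assumed absorbing (every action profile at $t\in T$ leads to $t$ with probability 1), and initial state $s_0$. Throughout, $\Sigma\setminus\Pi=\{\mathsf O\}$ is a single player, the opponent. A history is a nonempty finite word over $S$, a play an infinite one. A strategy for player $p$ maps each history $hs$ (last state $s$) to a probability distribution over $\mathsf{Av}_p(s)$; it is memoryless if its value depends only on the last state. A collective strategy is a tuple $\bar\sigma_\Pi=(\sigma_p)_{p\in\Pi}$ of strategies, one per team player; the team players randomise independently, i.e. at history $h$ the joint action $(a_p)_{p\in\Pi}$ is chosen with probability $\prod_{p\in\Pi}\sigma_p(h)(a_p)$. A complete profile $\bar\sigma$ induces a probability measure on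 plays starting at $s_0$ where from history $hs$ the next state is $s'$ with probability $\sum_{\bar a}\bar\sigma(hs)(\bar a)\,\delta(s,\bar a)(s')$, $\bar a$ ranging over available action profiles and $\bar\sigma(hs)(\bar a)=\prod_{p\in\Sigma}\sigma_p(hs)(a_p)$. A collective strategy is memoryless if each component is. *)

From HB Require Import structures.
From mathcomp Require Import all_boot all_order all_algebra.
From mathcomp Require Import classical_sets reals.
Set Implicit Arguments. Unset Strict Implicit. Unset Printing Implicit Defensive.
Import Order.TTheory GRing.Theory Num.Theory.
Local Open Scope ring_scope.

(* Players: Sigma = option Pi; [Some q] are the team players (Pi),
   [None] is the single opponent O.  A p is the finite action set of p. *)
Definition profile (Pi : finType) (A : option Pi -> finType) :=
  {dffun forall p : option Pi, A p}.

(* Game structure.  [delta s a] is the distribution delta(s, a) on S;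
   its values are only relevant for available action profiles a. *)
Record gstruct (R : realType) (Pi S : finType) (A : option Pi -> finType) := GStruct {
  Av : forall p : option Pi, S -> {set A p};
  delta : S -> @profile Pi A -> S -> R }.

Section Games.
Variables (R : realType) (Pi S : finType) (A : option Pi -> finType).
Variable G : @gstruct R Pi S A.

Definition is_dist (X : finType) (d : X -> R) :=
  (forall x, 0 <= d x) /\ \sum_x d x = 1.

Definition avail (s : S) (a : @profile Pi A) : bool :=
  [forall p, a p \in Av G p s].

Definition wf_gstruct : Prop :=
  (forall p s, Av G p s != finset.set0) /\
  (forall s a, avail s a -> is_dist (delta G s a)).

Definition absorbing (T : {set S}) : Prop :=
  forall t, t \in T -> forall a, avail t a -> delta G t a t = 1.

(* A strategy maps a history  h ++ [:: s]  (given as (h, s), s the last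
   state) to a probability distribution over A p supported by Av p s. *)
Definition strat (p : option Pi) := seq S -> S -> A p -> R.

Definition valid_strat (p : option Pi) (sg : strat p) : Prop :=
  forall h s, is_dist (sg h s) /\ (forall x, x \notin Av G p s -> sg h s x = 0).

Definition memoryless (p : option Pi) (sg : strat p) : Prop :=
  forall h h' s, sg h s = sg h' s.

Definition full_profile := forall p : option Pi, strat p.

Definition join (sT : forall q : Pi, strat (Some q)) (sO : strat None)
  : full_profile :=
  fun p => match p return strat p with Some q => sT q | None => sO end.

Definition step (sg : full_profile) (h : seq S) (s s' : S) : R :=
  \sum_(a | avail s a) (\prod_p sg p h s (a p)) * delta G s a s'.

Variable T : {set S}.

Fixpoint reachn (sg : full_profile) (n : nat) (h : seq S) (s : S) : R :=
  if s \in T then 1 else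
  match n with
  | 0 => 0
  | n'.+1 => \sum_s' step sg h s s' * reachn sg n' (rcons h s) s'
  end.

(* probability of the event "T is eventually reached" from s0: the
   (countable, increasing) union of the events "reached within n steps" *)
Definition reach_prob (sg : full_profile) (s0 : S) : R :=
  sup (range (fun n => reachn sg n [::] s0)).

End Games.

From HB Require Import structures.
From mathcomp Require Import all_boot all_order all_algebra.
From mathcomp Require Import classical_sets boolp reals.
From mathcomp Require Import lra.
Set Implicit Arguments. Unset Strict Implicit. Unset Printing Implicit Defensive.
Import Order.TTheory GRing.Theory Num.Theory.
Local Open Scope ring_scope.

(* Fix a collective strategy sT that beats t against every opponent, and let
   guarantee k h be the infimum over opponents of the probability that sT
   reaches T within k steps after history h; it increases in k to a limit
   guarantee_lim h.  An opponent that greedily minimises the expected next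
   value of guarantee_lim keeps the reachability probability below
   guarantee_lim [::] s0, so this limit exceeds t, and already guarantee n
   does for a finite horizon n.

   Next run discounted value iteration: viter 0 is the indicator of T and
   viter (k + 1) s = sup_x min_b g * E_(x,b)[viter k] outside T, x ranging over
   the team's mixed actions at s, with g < 1 so close to 1 that
   g^n * guarantee n > t.  Playing sT against the opponent that is greedy for
   viter shows viter n s0 >= g^n * guarantee n [::] s0.  Finally pick at every
   state a mixed action that is nearly optimal for viter n.  Against any
   opponent the resulting memoryless strategy makes w = viter n - c satisfy
   w <= g * E[w] outside T, and since g < 1 no play can keep w up without
   visiting T: w s <= P(T within k steps) + g^k. *)

Lemma ler_bernoulli (R : realFieldType) (r : R) (n : nat) :
  -1 <= r -> 1 + n%:R * r <= (1 + r) ^+ n.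
Proof.
move=> r_ge_N1; elim: n => [|n IH]; first by rewrite mul0r addr0.
have r1_ge0 : 0 <= 1 + r by lra.
have nrr_ge0 : 0 <= n%:R * r ^+ 2 by rewrite mulr_ge0 ?sqr_ge0.
rewrite exprSr -natr1; apply: le_trans (ler_wpM2r r1_ge0 IH).
rewrite expr2 in nrr_ge0; nra.
Qed.

Lemma exists_expr_lt (R : archiRealFieldType) (q c : R) :
  0 <= q < 1 -> 0 < c -> exists k : nat, q ^+ k < c.
Proof.
case/andP=> q_ge0 q_lt1 c_gt0.
have [->|q_neq0] := eqVneq q 0; first by exists 1%N; rewrite expr1.
have q_gt0 : 0 < q by rewrite lt_neqAle eq_sym q_neq0.
pose r := q^-1 - 1.
have r_gt0 : 0 < r by rewrite subr_gt0 invf_gt1.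
pose k := Num.bound (r * c)^-1.
have krc_gt1 : 1 < k%:R * (r * c).
  have rc_gt0 : 0 < r * c by rewrite mulr_gt0.
  rewrite -[X in X < _](mulVf (lt0r_neq0 rc_gt0)) ltr_pM2r //.
  by apply: archi_boundP; rewrite invr_ge0 ltW.
have qk_gt0 : 0 < q ^+ k by rewrite exprn_gt0.
have q_inv : q^-1 = 1 + r by rewrite /r addrC subrK.
have bern : 1 + k%:R * r <= (q ^+ k)^-1.
  by rewrite -exprVn q_inv; apply: ler_bernoulli; lra.
have : q ^+ k * (1 + k%:R * r) <= 1.
  by apply: le_trans (ler_wpM2l (ltW qk_gt0) bern) _; rewrite mulfV ?gt_eqF.
by exists k; nra.
Qed.

Lemma exists_discount_gt (R : realFieldType) (t u : R) (n : nat) :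
  0 <= t < u -> u <= 1 -> exists2 g : R, 0 <= g < 1 & t < g ^+ n * u.
Proof.
case/andP=> t_ge0 t_lt_u u_le1.
have n1_gt0 : 0 < 2 * (n%:R + 1) :> R by rewrite mulr_gt0 // ltr_wpDl.
pose eta := (u - t) / (2 * (n%:R + 1)).
have eta_gt0 : 0 < eta by rewrite divr_gt0 // subr_gt0.
have eta_def : eta * (2 * (n%:R + 1)) = u - t by rewrite divfK ?lt0r_neq0.
have n_ge0 : 0 <= n%:R :> R by [].
have eta_le1 : eta <= 1 by nra.
exists (1 - eta); first by apply/andP; split; lra.
have bern : 1 - n%:R * eta <= (1 - eta) ^+ n.
  by rewrite -mulrN; apply: ler_bernoulli; lra.
have neta_ge0 : 0 <= n%:R * eta by rewrite mulr_ge0 // ltW.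
apply: lt_le_trans (ler_wpM2r (ltW (le_lt_trans t_ge0 t_lt_u)) bern); nra.
Qed.

Lemma big_prod_option (R : comPzSemiRingType) (I : finType) (F : option I -> R) :
  \prod_(p : option I) F p = F None * \prod_(q : I) F (Some q).
Proof.
rewrite (bigD1 None) //=; congr (_ * _).
rewrite (reindex_omap Some id) //=; last by case.
by apply: eq_bigl => j; rewrite eqxx.
Qed.

Lemma big_distr_dffun (R : comPzSemiRingType) (I : finType) (T_ : I -> finType)
    (P : forall i, {pred T_ i}) (F : forall i, T_ i -> R) :
  \sum_(a : {dffun forall i, T_ i} | [forall i, a i \in P i]) \prod_i F i (a i)
    = \prod_i \sum_(x in P i) F i x.
Proof.
pose Q i (j : {i : I & T_ i}) := (tag j == i) && (tagged j \in P (tag j)).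
have sum_tagged i : \sum_(x in P i) F i x = \sum_(j | Q i j) F (tag j) (tagged j).
  rewrite -(sig_big_dep (pred1 i) (fun k x => x \in P k) F) /=.
  by rewrite big_pred1_eq.
rewrite (eq_bigr _ (fun i _ => sum_tagged i)) bigA_distr_big_dep /=.
pose tagf (a : {dffun forall i, T_ i}) := [ffun i => Tagged T_ (a i)].
have tagf_inj : injective tagf.
  move=> a b /ffunP ab; apply/ffunP => i.
  by have := ab i; rewrite !ffunE; apply: eq_from_Tagged.
transitivity (\sum_(f in tagf @: [set a : {dffun forall i, T_ i} | [forall i, a i \in P i]])
                 \prod_i F (tag (f i)) (tagged (f i))).
  rewrite big_imset /=; last exact: in2W.
  apply: eq_big => [a | a _]; first by rewrite inE.
  by apply: eq_bigr => i _; rewrite ffunE.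
apply: eq_bigl => f; apply/imsetP/familyP => [[a] | Qf].
  by rewrite inE => /forallP Pa -> i; rewrite ffunE unfold_in /Q /= eqxx Pa.
have tag_f : [forall i, tag (f i) == i] by apply/forallP => i; case/andP: (Qf i).
pose a := dffun_of_fprod (FProd tag_f).
have f_def : f = tagf a by apply/ffunP => i; rewrite !ffunE /= /fun_of_fprod etaggedK.
exists a => //; rewrite inE; apply/forallP => i.
by case/andP: (Qf i); rewrite f_def ffunE.
Qed.

Section Expectation.
Variables (R : realType) (X : finType).
Implicit Types (d w : X -> R) (c : R).

Definition expect d w := \sum_x d x * w x.

Lemma expectZ d w c : expect d (fun x => c * w x) = c * expect d w.
Proof. by rewrite /expect big_distrr; apply: eq_bigr => x _; rewrite mulrCA. Qed.

Lemma expectDc d w c : is_dist d -> expect d (fun x => w x + c) = expect d w + c.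
Proof.
case=> _ d_sum1; rewrite /expect; under eq_bigr do rewrite mulrDr.
by rewrite big_split /= -big_distrl /= d_sum1 mul1r.
Qed.

Lemma ler_expect d w w' : (forall x, 0 <= d x) -> (forall x, w x <= w' x) ->
  expect d w <= expect d w'.
Proof. by move=> d_ge0 le_ww'; apply: ler_sum => x _; rewrite ler_wpM2l. Qed.

Lemma expect_cst d c : is_dist d -> expect d (fun=> c) = c.
Proof. by case=> _ d_sum1; rewrite /expect -big_distrl /= d_sum1 mul1r. Qed.

Lemma expect_le d w c : is_dist d -> (forall x, w x <= c) -> expect d w <= c.
Proof.
by move=> d_dist /(ler_expect d_dist.1); rewrite expect_cst.
Qed.

Lemma expect_ge d w c : is_dist d -> (forall x, c <= w x) -> c <= expect d w.
Proof.
by move=> d_dist /(ler_expect d_dist.1); rewrite expect_cst.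
Qed.

End Expectation.

Section Reachability.
Variables (R : realType) (Pi S : finType) (A : option Pi -> finType).
Variables (G : gstruct R S A) (T : {set S}) (sg : full_profile R S A).
Hypothesis step_dist : forall h s, is_dist (step G sg h s).
Local Notation reachn := (reachn G T sg).

Lemma reachnS n h s : reachn n.+1 h s =
  if s \in T then 1 else expect (step G sg h s) (reachn n (rcons h s)).
Proof. by []. Qed.

Lemma reachn_T n h s : s \in T -> reachn n h s = 1.
Proof. by case: n => [|n] /= ->. Qed.

Lemma reachn0 h s : s \notin T -> reachn 0 h s = 0.
Proof. by move=> /negbTE /= ->. Qed.

Lemma reachn_ge0 n h s : 0 <= reachn n h s.
Proof.
elim: n h s => [|n IH] h s; have [inT|notT] := boolP (s \in T).
- by rewrite reachn_T.
- by rewrite reachn0.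
- by rewrite reachn_T.
by rewrite reachnS (negbTE notT); apply: expect_ge.
Qed.

Lemma reachn_le1 n h s : reachn n h s <= 1.
Proof.
elim: n h s => [|n IH] h s; have [inT|notT] := boolP (s \in T).
- by rewrite reachn_T.
- by rewrite reachn0.
- by rewrite reachn_T.
by rewrite reachnS (negbTE notT); apply: expect_le.
Qed.

Lemma reachn_leS n h s : reachn n h s <= reachn n.+1 h s.
Proof.
elim: n h s => [|n IH] h s; have [inT|notT] := boolP (s \in T).
- by rewrite !reachn_T.
- by rewrite reachn0 // reachn_ge0.
- by rewrite !reachn_T.
by rewrite !reachnS (negbTE notT); apply: ler_expect => //; case: (step_dist h s).
Qed.

Let has_sup_reachn s0 : has_sup (range (fun n => reachn n [::] s0)).
Proof.
split; first by exists (reachn 0 [::] s0), 0%N.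
by exists 1 => _ [n _ <-]; apply: reachn_le1.
Qed.

Lemma reachn_le_reach_prob n s0 : reachn n [::] s0 <= reach_prob G T sg s0.
Proof. by apply: ub_le_sup; [case: (has_sup_reachn s0) | exists n]. Qed.

Lemma reach_prob_le s0 c : (forall n, reachn n [::] s0 <= c) -> reach_prob G T sg s0 <= c.
Proof. by move=> le_c; apply: ge_sup => [|_ [n _ <-]]; [case: (has_sup_reachn s0) |]. Qed.

Lemma reachn_ge_discounted (g : R) (w : S -> R) :
  0 <= g <= 1 -> (forall s, w s <= 1) ->
  (forall h s, s \notin T -> w s <= g * expect (step G sg h s) w) ->
  forall n h s, w s <= reachn n h s + g ^+ n.
Proof.
case/andP=> g_ge0 g_le1 w_le1 w_super.
elim=> [|n IH] h s; have [inT|notT] := boolP (s \in T).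
- by rewrite reachn_T // expr0; have := w_le1 s; lra.
- by rewrite reachn0 // expr0 add0r.
- by rewrite reachn_T //; have := w_le1 s; have := exprn_ge0 n.+1 g_ge0; lra.
apply: (le_trans (w_super h s notT)).
have w_next : expect (step G sg h s) w <= reachn n.+1 h s + g ^+ n.
  rewrite reachnS (negbTE notT) -expectDc //.
  exact: ler_expect (step_dist h s).1 (IH (rcons h s)).
have := reachn_ge0 n.+1 h s; rewrite exprS; nra.
Qed.

End Reachability.

Section LocalPlay.
Variables (R : realType) (Pi S : finType) (A : option Pi -> finType).
Variable G : gstruct R S A.
Hypothesis wfG : wf_gstruct G.

Definition mixed_action p s (d : A p -> R) :=
  is_dist d /\ forall x, x \notin Av G p s -> d x = 0.

Definition team_strat := forall q : Pi, strat R S A (Some q).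

Definition team_mix := forall q : Pi, A (Some q) -> R.

Definition team_mixed s (x : team_mix) := forall q, mixed_action s (x q).

Definition team_at (sT : team_strat) h s : team_mix :=
  fun q => sT q h s.

Definition pure p (b : A p) : A p -> R := fun c => (c == b)%:R.

Definition trans (x : team_mix) (y : A None -> R) s s' :=
  \sum_(a | avail G s a) (y (a None) * \prod_q x q (a (Some q))) * delta G s a s'.

Lemma step_join sT sO h s :
  step G (join sT sO) h s = trans (team_at sT h s) (sO h s) s.
Proof. by apply/funext => s'; apply: eq_bigr => a _; rewrite big_prod_option. Qed.

Lemma exists_available p s : exists b, b \in Av G p s.
Proof. exact/set0Pn/wfG.1. Qed.

Lemma pure_mixed_action p s b : b \in Av G p s -> mixed_action s (pure b).
Proof.
move=> b_av; split; first split.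
- by move=> c; rewrite ler0n.
- by rewrite (bigD1 b) //= big1 ?addr0 /pure ?eqxx // => c /negbTE ->.
- by move=> c; apply: contraNeq; rewrite pnatr_eq0 eqb0 negbK => /eqP ->.
Qed.

Definition some_action p s : A p := xchoose (exists_available p s).

Lemma pure_some_action p s : mixed_action s (pure (some_action p s)).
Proof. exact/pure_mixed_action/xchooseP. Qed.

Lemma exists_valid_strat p : exists sg : strat R S A p, valid_strat G sg.
Proof. by exists (fun _ s => pure (some_action p s)) => h s; apply: pure_some_action. Qed.

Lemma exists_team_mixed s : exists x, team_mixed s x.
Proof. by exists (fun q => pure (some_action (Some q) s)) => q; apply: pure_some_action. Qed.

Lemma mixed_action_sum p s (d : A p -> R) :
  mixed_action s d -> \sum_(c in Av G p s) d c = 1.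
Proof.
case=> -[_ d_sum1] d_out; rewrite -d_sum1 [RHS](bigID (mem (Av G p s))) /=.
by rewrite [X in _ = _ + X]big1 ?addr0 // => c /d_out.
Qed.

Lemma trans_dist x y s : team_mixed s x -> mixed_action s y -> is_dist (trans x y s).
Proof.
move=> x_mixed y_mixed; split => [s'|].
  apply: sumr_ge0 => a a_av; rewrite !mulr_ge0 ?prodr_ge0 //.
  - exact: y_mixed.1.1.
  - by move=> q _; apply: (x_mixed q).1.1.
  - exact: (wfG.2 s a a_av).1.
rewrite /trans exchange_big /=.
under eq_bigr => a a_av do rewrite -big_distrr /= (wfG.2 s a a_av).2 mulr1.
pose d p : A p -> R := if p is Some q then x q else y.
transitivity (\sum_(a : profile A | avail G s a) \prod_p d p (a p)).
  by apply: eq_bigr => a _; rewrite big_prod_option.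
by rewrite big_distr_dffun; apply: big1 => -[q|] _; apply: mixed_action_sum.
Qed.

Lemma join_trans_dist sT sO h s : (forall q, valid_strat G (sT q)) -> valid_strat G sO ->
  is_dist (trans (team_at sT h s) (sO h s) s).
Proof.
by move=> sT_valid sO_valid; apply: trans_dist => [q|]; [apply: sT_valid | apply: sO_valid].
Qed.

Lemma valid_step_dist sT sO h s : (forall q, valid_strat G (sT q)) -> valid_strat G sO ->
  is_dist (step G (join sT sO) h s).
Proof. by rewrite step_join; apply: join_trans_dist. Qed.

Lemma trans_mixture x y s s' :
  trans x y s s' = \sum_b y b * trans x (pure b) s s'.
Proof.
under [RHS]eq_bigr do rewrite big_distrr.
rewrite exchange_big /=; apply: eq_bigr => a _.
rewrite [RHS](bigD1 (a None)) //= [X in _ = _ + X]big1 => [|b b_neq].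
  by rewrite /pure eqxx mul1r addr0 !mulrA.
by rewrite /pure eq_sym (negbTE b_neq) !mul0r mulr0.
Qed.

Lemma expect_trans_mixture x y s w :
  expect (trans x y s) w = \sum_b y b * expect (trans x (pure b) s) w.
Proof.
rewrite /expect; under eq_bigr do rewrite trans_mixture big_distrl.
rewrite exchange_big /=; apply: eq_bigr => b _.
by rewrite big_distrr; apply: eq_bigr => s' _; rewrite /= mulrA.
Qed.

Lemma expect_trans_ge_min x y s w m : mixed_action s y ->
  (forall b, b \in Av G None s -> m <= expect (trans x (pure b) s) w) ->
  m <= expect (trans x y s) w.
Proof.
move=> y_mixed m_le; rewrite expect_trans_mixture.
rewrite -[m](expect_cst m y_mixed.1); apply: ler_sum => b _.
have [b_av|b_out] := boolP (b \in Av G None s); last by rewrite (y_mixed.2 b b_out) !mul0r.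
by rewrite ler_wpM2l ?m_le //; apply: y_mixed.1.1.
Qed.

Lemma greedy_opponent (x : seq S -> S -> team_mix) (w : seq S -> S -> S -> R) :
  exists2 sO : strat R S A None, valid_strat G sO &
    forall h s y, mixed_action s y ->
      expect (trans (x h s) (sO h s) s) (w h s) <= expect (trans (x h s) y s) (w h s).
Proof.
pose F h s b := expect (trans (x h s) (pure b) s) (w h s).
have some_av s : some_action None s \in Av G None s by apply: xchooseP.
pose best h s := [arg min_(b < some_action None s in Av G None s) F h s b]%O.
exists (fun h s => pure (best h s)).
  by move=> h s; apply: pure_mixed_action; rewrite /best; case: arg_minP.
move=> h s y y_mixed; apply: expect_trans_ge_min => // b b_av.
by rewrite /best; case: arg_minP => // b' _; apply.
Qed.

End LocalPlay.

Arguments pure {R Pi A p}.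

Section FiniteHorizon.
Variables (R : realType) (Pi S : finType) (A : option Pi -> finType).
Variables (G : gstruct R S A) (T : {set S}).
Hypothesis wfG : wf_gstruct G.
(* Otherwise the player q would become an implicit argument of sT. *)
Local Unset Implicit Arguments.
Variable sT : team_strat R S A.
Local Set Implicit Arguments.
Hypothesis sT_valid : forall q, valid_strat G (sT q).
Local Open Scope classical_set_scope.

Definition opp_reachn k h s :=
  [set reachn G T (join sT sO) k h s | sO in [set sO : strat R S A None | valid_strat G sO]].

Definition guarantee k h s := inf (opp_reachn k h s).

Definition guarantee_lim h s := sup (range (fun k => guarantee k h s)).

Let opp_trans_dist sO : valid_strat G sO ->
  forall h s, is_dist (trans G (team_at sT h s) (sO h s) s).
Proof. by move=> sO_valid h s; apply: join_trans_dist. Qed.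

Let opp_step_dist sO : valid_strat G sO -> forall h s, is_dist (step G (join sT sO) h s).
Proof. by move=> sO_valid h s; apply: valid_step_dist. Qed.

Let has_inf_opp_reachn k h s : has_inf (opp_reachn k h s).
Proof.
split; last by exists 0 => _ [sO sO_valid <-]; apply/reachn_ge0/opp_step_dist.
have [sO sO_valid] := exists_valid_strat wfG None.
by exists (reachn G T (join sT sO) k h s), sO.
Qed.

Lemma guarantee_le k h s sO : valid_strat G sO ->
  guarantee k h s <= reachn G T (join sT sO) k h s.
Proof. by move=> sO_valid; apply: ge_inf; [case: (has_inf_opp_reachn k h s) | exists sO]. Qed.

Lemma guarantee_adherent k h s e : 0 < e ->
  exists2 sO, valid_strat G sO & reachn G T (join sT sO) k h s < guarantee k h s + e.
Proof.
move=> e_gt0; have [_ [sO sO_valid <-]] := inf_adherent e_gt0 (has_inf_opp_reachn k h s).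
by exists sO.
Qed.

Lemma guarantee_ge c k h s :
  (forall sO, valid_strat G sO -> c <= reachn G T (join sT sO) k h s) ->
  c <= guarantee k h s.
Proof.
move=> c_le; apply: lb_le_inf => [|_ [sO sO_valid <-]]; last exact: c_le.
by case: (has_inf_opp_reachn k h s).
Qed.

Lemma guarantee_ge0 k h s : 0 <= guarantee k h s.
Proof. by apply: guarantee_ge => sO sO_valid; apply/reachn_ge0/opp_step_dist. Qed.

Lemma guarantee_le1 k h s : guarantee k h s <= 1.
Proof.
have [sO sO_valid] := exists_valid_strat wfG None.
by apply: le_trans (guarantee_le k h s sO_valid) _; apply/reachn_le1/opp_step_dist.
Qed.

Lemma guarantee_T k h s : s \in T -> guarantee k h s = 1.
Proof.
by move=> inT; apply/le_anti; rewrite guarantee_le1 guarantee_ge // => sO _; rewrite reachn_T.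
Qed.

Lemma guarantee_nondecreasing h s :
  {homo (fun k => guarantee k h s) : k k' / (k <= k')%N >-> k <= k'}.
Proof.
apply: homo_leq => [k | k k' k'' | k]; [exact: lexx | exact: le_trans |].
apply: guarantee_ge => sO sO_valid; apply: le_trans (guarantee_le k h s sO_valid) _.
exact/reachn_leS/opp_step_dist.
Qed.

Let has_sup_guarantee h s : has_sup (range (fun k => guarantee k h s)).
Proof.
split; first by exists (guarantee 0 h s), 0%N.
by exists 1 => _ [k _ <-]; apply: guarantee_le1.
Qed.

Lemma guarantee_le_lim k h s : guarantee k h s <= guarantee_lim h s.
Proof. by apply: ub_le_sup; [case: (has_sup_guarantee h s) | exists k]. Qed.

Lemma guarantee_lim_uniform h e : 0 < e ->
  exists K, forall s, guarantee_lim h s - e <= guarantee K h s.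
Proof.
move=> e_gt0.
have /choice [k k_close] s : exists k, guarantee_lim h s - e < guarantee k h s.
  by have [_ [k _ <-]] := sup_adherent e_gt0 (has_sup_guarantee h s); exists k.
exists (\max_s k s)%N => s; apply: le_trans (ltW (k_close s)) _.
exact/guarantee_nondecreasing/leq_bigmax.
Qed.

(* Take the first move of an opponent that is e/2-optimal for a horizon K + 1
   at which guarantee K approximates guarantee_lim uniformly up to e/2. *)
Lemma guarantee_lim_step h s e : s \notin T -> 0 < e ->
  exists2 y, mixed_action G s y &
    expect (trans G (team_at sT h s) y s) (guarantee_lim (rcons h s)) <= guarantee_lim h s + e.
Proof.
move=> notT e_gt0; have e2_gt0 : 0 < e / 2 by rewrite divr_gt0.
have [K K_unif] := guarantee_lim_uniform (rcons h s) e2_gt0.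
have [sO sO_valid sO_close] := guarantee_adherent K.+1 h s e2_gt0.
exists (sO h s); first exact: sO_valid.
have lim_le : expect (trans G (team_at sT h s) (sO h s) s) (guarantee_lim (rcons h s)) - e / 2
    <= reachn G T (join sT sO) K.+1 h s.
  rewrite reachnS (negbTE notT) step_join -expectDc; last exact: opp_trans_dist.
  apply: ler_expect => [|s']; first exact: (opp_trans_dist sO_valid h s).1.
  exact: le_trans (K_unif s') (guarantee_le K (rcons h s) s' sO_valid).
have := guarantee_le_lim K.+1 h s; lra.
Qed.

Lemma finite_horizon t s0 :
  (forall sO, valid_strat G sO -> t < reach_prob G T (join sT sO) s0) ->
  exists n, t < guarantee n [::] s0.
Proof.
move=> sT_wins.
have [sO sO_valid sO_greedy] :=
  greedy_opponent wfG (team_at sT) (fun h s => guarantee_lim (rcons h s)).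
have reachn_le_lim m h s : reachn G T (join sT sO) m h s <= guarantee_lim h s.
  elim: m h s => [|m IH] h s; have [inT|notT] := boolP (s \in T).
  - by rewrite reachn_T // -(guarantee_T 0 h inT) guarantee_le_lim.
  - by rewrite reachn0 // (le_trans (guarantee_ge0 0 h s)) ?guarantee_le_lim.
  - by rewrite reachn_T // -(guarantee_T 0 h inT) guarantee_le_lim.
  rewrite reachnS (negbTE notT) step_join.
  apply: le_trans (ler_expect (opp_trans_dist sO_valid h s).1 (IH (rcons h s))) _.
  apply/ler_addgt0Pr => e e_gt0.
  have [y y_mixed y_le] := guarantee_lim_step h notT e_gt0.
  exact: le_trans (sO_greedy h s y y_mixed) y_le.
have reach_le : reach_prob G T (join sT sO) s0 <= guarantee_lim [::] s0.
  by apply: reach_prob_le => [h s|n]; [apply: opp_step_dist | apply: reachn_le_lim].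
have := lt_le_trans (sT_wins sO sO_valid) reach_le.
by case/(sup_gt (has_sup_guarantee [::] s0).1) => _ [n _ <-]; exists n.
Qed.

End FiniteHorizon.

Section ValueIteration.
Variables (R : realType) (Pi S : finType) (A : option Pi -> finType).
Variables (G : gstruct R S A) (T : {set S}).
Hypothesis wfG : wf_gstruct G.
Variable g : R.
Hypothesis g01 : 0 <= g <= 1.
Local Open Scope classical_set_scope.

Definition bounded01 (w : S -> R) := forall s, 0 <= w s <= 1.

Definition bellman_set (w : S -> R) s := [set v | exists2 x, team_mixed G s x &
  forall b, b \in Av G None s -> v <= g * expect (trans G x (pure b) s) w].

Definition bellman w s := sup (bellman_set w s).

Fixpoint viter k s :=
  if s \in T then 1 else if k is k'.+1 then bellman (viter k') s else 0.

Let trans_pure_dist s x b : team_mixed G s x -> b \in Av G None s ->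
  is_dist (trans G x (pure b) s).
Proof. by move=> x_mixed b_av; apply: trans_dist => //; apply: pure_mixed_action. Qed.

Let expect_bounded01 s x b w : team_mixed G s x -> b \in Av G None s -> bounded01 w ->
  0 <= expect (trans G x (pure b) s) w <= 1.
Proof.
move=> x_mixed b_av w01; have d_dist := trans_pure_dist x_mixed b_av.
by rewrite expect_ge ?expect_le // => s'; case/andP: (w01 s').
Qed.

Lemma bellman_set0 w s : bounded01 w -> bellman_set w s 0.
Proof.
move=> w01; have [x x_mixed] := exists_team_mixed wfG s.
exists x => // b b_av; case/andP: g01 => g_ge0 _.
by case/andP: (expect_bounded01 x_mixed b_av w01) => E_ge0 _; rewrite mulr_ge0.
Qed.

Lemma bellman_set_le1 w s v : bounded01 w -> bellman_set w s v -> v <= 1.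
Proof.
move=> w01 [x x_mixed v_le]; have [b b_av] := exists_available wfG None s.
apply: le_trans (v_le b b_av) _; case/andP: g01 => g_ge0 g_le1.
by case/andP: (expect_bounded01 x_mixed b_av w01) => E_ge0 E_le1; rewrite mulr_ile1.
Qed.

Let has_sup_bellman_set w s : bounded01 w -> has_sup (bellman_set w s).
Proof.
move=> w01; split; first by exists 0; apply: bellman_set0.
by exists 1 => v; apply: bellman_set_le1.
Qed.

Lemma bellman_ub w s v : bounded01 w -> bellman_set w s v -> v <= bellman w s.
Proof. by move=> w01 v_in; apply: ub_le_sup => //; case: (has_sup_bellman_set s w01). Qed.

Lemma bellman_bounded w : bounded01 w -> bounded01 (bellman w).
Proof.
move=> w01 s; rewrite bellman_ub //; last exact: bellman_set0.
by apply: ge_sup => [|v]; [exists 0; apply: bellman_set0 | apply: bellman_set_le1].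
Qed.

Lemma le_bellman w w' s : bounded01 w -> bounded01 w' -> (forall s, w s <= w' s) ->
  bellman w s <= bellman w' s.
Proof.
move=> w01 w'01 le_ww'; apply: ge_sup => [|v [x x_mixed v_le]].
  by exists 0; apply: bellman_set0.
apply: bellman_ub => //; exists x => // b b_av; apply: le_trans (v_le b b_av) _.
case/andP: g01 => g_ge0 _; rewrite ler_wpM2l //.
exact: ler_expect (trans_pure_dist x_mixed b_av).1 le_ww'.
Qed.

Lemma bellman_near_opt w s e : bounded01 w -> 0 < e ->
  exists2 x, team_mixed G s x &
    forall b, b \in Av G None s -> bellman w s - e <= g * expect (trans G x (pure b) s) w.
Proof.
move=> w01 e_gt0.
have [v [x x_mixed v_le] v_gt] := sup_adherent e_gt0 (has_sup_bellman_set s w01).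
by exists x => // b b_av; apply: le_trans (ltW v_gt) (v_le b b_av).
Qed.

Lemma viter_bounded k : bounded01 (viter k).
Proof.
elim: k => [|k IH] s /=; case: (s \in T) => //=; rewrite ?lexx ?ler01 //.
exact: bellman_bounded.
Qed.

Lemma viter_leS k s : viter k s <= viter k.+1 s.
Proof.
elim: k s => [|k IH] s /=; case: (s \in T) => //.
  by case/andP: (bellman_bounded (viter_bounded 0) s).
by apply: le_bellman; [apply: viter_bounded | apply: (viter_bounded k.+1) | apply: IH].
Qed.

Lemma viter_ge_reachn sT n s0 : (forall q, valid_strat G (sT q)) ->
  exists2 sO, valid_strat G sO & g ^+ n * reachn G T (join sT sO) n [::] s0 <= viter n s0.
Proof.
move=> sT_valid; case/andP: g01 => g_ge0 g_le1.
(* After a history of length m the opponent is greedy for the remaining horizon n - m - 1. *)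
have [sO sO_valid sO_greedy] :=
  greedy_opponent wfG (team_at sT) (fun h _ => viter (n - (size h).+1)).
exists sO => //.
suff disc_le k h s : (size h + k)%N = n ->
    g ^+ k * reachn G T (join sT sO) k h s <= viter k s by exact: disc_le.
elim: k h s => [|k IH] h s size_h; have [inT|notT] := boolP (s \in T).
- by rewrite reachn_T //= inT expr0 mulr1.
- by rewrite reachn0 //= (negbTE notT) mulr0.
- by rewrite reachn_T //= inT mulr1 exprn_ile1.
rewrite reachnS /= (negbTE notT) step_join exprS -mulrA -expectZ.
apply: bellman_ub; first exact: viter_bounded.
exists (team_at sT h s) => [q | b b_av]; first exact: sT_valid.
rewrite ler_wpM2l //.
have := sO_greedy h s (pure b) (pure_mixed_action b_av).
have -> : (n - (size h).+1)%N = k by rewrite -size_h addnS subSS addKn.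
apply: le_trans; apply: ler_expect => [|s'].
  exact: (join_trans_dist wfG h s sT_valid sO_valid).1.
by apply: IH; rewrite size_rcons addSnnS.
Qed.

Lemma memoryless_of_viter n s0 t : g < 1 -> t < viter n s0 ->
  exists sT : team_strat R S A,
    (forall q, valid_strat G (sT q)) /\ (forall q, memoryless (sT q)) /\
    (forall sO, valid_strat G sO -> t < reach_prob G T (join sT sO) s0).
Proof.
move=> g_lt1 t_lt; case/andP: g01 => g_ge0 g_le1.
pose c := (viter n s0 - t) / 2.
have c_gt0 : 0 < c by rewrite divr_gt0 // subr_gt0.
have c_twice : c * 2 = viter n s0 - t by rewrite divfK // pnatr_eq0.
have e_gt0 : 0 < (1 - g) * c by rewrite mulr_gt0 // subr_gt0.
have /choice [pi pi_spec] s : exists x, team_mixed G s x /\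
    forall b, b \in Av G None s ->
      bellman (viter n) s - (1 - g) * c <= g * expect (trans G x (pure b) s) (viter n).
  by have [x x_mixed x_opt] := bellman_near_opt s (viter_bounded n) e_gt0; exists x.
pose sT q (h : seq S) s := pi s q.
have sT_valid q : valid_strat G (sT q) by move=> h s; apply: (pi_spec s).1.
exists sT; split=> //; split=> [q h h' s // | sO sO_valid].
pose w s := viter n s - c.
have w_le1 s : w s <= 1 by case/andP: (viter_bounded n s); rewrite /w; lra.
(* Outside T, viter n <= viter n.+1 = bellman (viter n), and pi is (1 - g) c-optimal. *)
have w_super h s : s \notin T -> w s <= g * expect (step G (join sT sO) h s) w.
  move=> notT; rewrite step_join -expectZ.
  apply: expect_trans_ge_min; first exact: sO_valid.
  move=> b b_av; rewrite expectZ /w expectDc; last first.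
    by apply: trans_pure_dist => // q; apply: (pi_spec s).1.
  have := (pi_spec s).2 b b_av; have := viter_leS n s; rewrite /= (negbTE notT).
  rewrite /team_at /sT; nra.
have [k gk_lt] : exists k, g ^+ k < c by apply: exists_expr_lt; rewrite ?g_ge0.
have sg_dist h s : is_dist (step G (join sT sO) h s) by apply: valid_step_dist.
have := reachn_ge_discounted sg_dist g01 w_le1 w_super k [::] s0.
have := reachn_le_reach_prob T sg_dist k s0.
rewrite /w; lra.
Qed.

End ValueIteration.

Theorem theorem1 (R : realType) (Pi S : finType) (A : option Pi -> finType)
  (G : gstruct R S A) (T : {set S}) (s0 : S) (t : rat) :
  wf_gstruct G -> absorbing G T -> 0 <= t <= 1 ->
  (exists sT : forall q : Pi, strat R S A (Some q),
      (forall q, valid_strat G (sT q)) /\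
      (forall sO : strat R S A None, valid_strat G sO ->
         ratr t < reach_prob G T (join sT sO) s0)) ->
  exists sT : forall q : Pi, strat R S A (Some q),
      (forall q, valid_strat G (sT q)) /\ (forall q, memoryless (sT q)) /\
      (forall sO : strat R S A None, valid_strat G sO ->
         ratr t < reach_prob G T (join sT sO) s0).
Proof.
move=> wfG _ /andP[t_ge0 _] [sT [sT_valid sT_wins]].
have [n t_lt_guarantee] := finite_horizon wfG sT_valid sT_wins.
have [g /andP[g_ge0 g_lt1] t_lt_disc] :
    exists2 g : R, 0 <= g < 1 & ratr t < g ^+ n * guarantee G T sT n [::] s0.
  by apply: exists_discount_gt; [rewrite ler0q t_ge0 | apply: guarantee_le1].
have g01 : 0 <= g <= 1 by rewrite g_ge0 ltW.
have [sO sO_valid reach_le] := viter_ge_reachn T wfG g01 n s0 sT_valid.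
apply: (memoryless_of_viter wfG g01 g_lt1).
apply: lt_le_trans t_lt_disc (le_trans _ reach_le).
by rewrite ler_wpM2l ?exprn_ge0 // (guarantee_le T wfG sT_valid).
Qed.
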